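(* Let $G$ be an optimal digraph with $\beta_G > \alpha_G$, and let $u,v,w$ be distinct vertices appearing in clockwise order. Then not all of the ordered pairs $(u,v),(v,w),(w,u)$ are extreme. Moreover, if two of them are extreme, then either all three of $uv, vw, wu$ are edges of $G$, or two of them are edges of $G$ and the third is a shortest non-edge.
   Context: Digraphs are finite, loopless, with at most one edge $uv$ per ordered pair. A digraph is $2$-free if no distinct $u,v$ have both $uv,vu$ as edges. A circular interval digraph is a digraph together with a fixed arrangement of its vertices in a circle such that for all distinct $u,v,w$ in clockwise order with $uw\in E(G)$, also $uv,vw\in E(G)$. For distinct $u,v$, $d(u,v) = 1 + |\{w: u,w,v \text{ distinct, in clockwise order}\}|$; this is the length of the ordered pair $uv$. A non-edge is an ordered pair $(u,v)$ of distinct vertices with neither $uv$ nor $vu$ an edge; its length is $d(u,v)$. $\alpha_G$ is the minimum length of a non-edge ($\infty$ if none) and $\beta_G$ the maximum length of an edge ($0$ if none). A longest edge is an edge of length $\beta_G$; a shortest non-edge is a non-edge of length $\alpha_G$. An ordered pair is extreme if it is a longest edge or a shortest non-edge. $\xi(G)$ is the number of pairs $(uv,(w,x))$ with $uv\in E(G)$, $(w,x)$ a non-edge, $d(u,v)>d(w,x)$. $\tilde P_3(G)$ is the number of triples $(a,b,c)$ of distinct vertices with $ab,bc\in E(G)$ and $ac,ca\notin E(G)$. For fixed $n\ge 4$, $G$ is optimal if it is a $2$-free circular interval digraph on $n$ vertices maximizing $\tilde P_3$ among all such digraphs and, subject to this, minimizing $\xi(G)$. *)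

From mathcomp Require Import all_boot.
Set Implicit Arguments. Unset Strict Implicit. Unset Printing Implicit Defensive.

(* Vertices are 'I_n, arranged clockwise in the order 0, 1, ..., n-1.
   A digraph is an edge relation E : rel 'I_n (at most one edge per ordered
   pair is automatic). *)

Section Defs.
Variable n : nat.
Implicit Types (E : rel 'I_n) (u v w x : 'I_n).

(* d(u,v) = 1 + #{w : u,w,v distinct in clockwise order} = (v - u) mod n *)
Definition dist u v : nat := (v + n - u) %% n.

Definition cw u v w : bool :=
  [&& u != v, v != w, u != w & dist u v < dist u w].

Definition loopless E : bool := [forall u, ~~ E u u].

Definition two_free E : bool :=
  [forall u, forall v, (u != v) ==> ~~ (E u v && E v u)].

Definition circ_interval E : bool :=
  [forall u, forall v, forall w, (cw u v w && E u w) ==> (E u v && E v w)].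

Definition cid2 E : bool := [&& loopless E, two_free E & circ_interval E].

Definition nonedge E u v : bool := [&& u != v, ~~ E u v & ~~ E v u].

(* alpha_G : minimum length of a non-edge; "infinity" is represented by n,
   which exceeds every length (lengths are at most n-1). *)
Definition alpha E : nat :=
  \big[minn/n]_(p : 'I_n * 'I_n | nonedge E p.1 p.2) dist p.1 p.2.

Definition beta E : nat :=
  \max_(p : 'I_n * 'I_n | E p.1 p.2) dist p.1 p.2.

Definition longest_edge E u v : bool := E u v && (dist u v == beta E).
Definition shortest_nonedge E u v : bool :=
  nonedge E u v && (dist u v == alpha E).
Definition extreme E u v : bool := longest_edge E u v || shortest_nonedge E u v.

Definition xi E : nat :=
  #|[set q : ('I_n * 'I_n) * ('I_n * 'I_n) |
      [&& E q.1.1 q.1.2, nonedge E q.2.1 q.2.2 &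
          dist q.2.1 q.2.2 < dist q.1.1 q.1.2]]|.

Definition P3 E : nat :=
  #|[set t : 'I_n * 'I_n * 'I_n |
      [&& t.1.1 != t.1.2, t.1.2 != t.2, t.1.1 != t.2,
          E t.1.1 t.1.2, E t.1.2 t.2, ~~ E t.1.1 t.2 & ~~ E t.2 t.1.1]]|.

Definition optimal E : Prop :=
  cid2 E /\
  forall E' : rel 'I_n, cid2 E' ->
    P3 E' <= P3 E /\ (P3 E' = P3 E -> xi E <= xi E').

End Defs.

(* In a 2-free circular interval digraph the out-neighbours of a vertex x are
   exactly the outdeg x vertices following x on the circle, and its
   in-neighbours the indeg x vertices preceding it (out_interval, in_interval);
   in particular all degrees are at most beta.

   Optimality is used through two local edits.  Deleting a longest edge xy
   keeps the digraph a 2-free circular interval digraph and changes P3 by an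
   amount depending only on n, beta, outdeg y and indeg x
   (delete_edge_formula); as P3 cannot increase we get longest_edge_balance.
   Adding a shortest non-edge ac is the inverse edit; it strictly decreases xi,
   so it must strictly decrease P3 (shortest_nonedge_balance).  These two
   inequalities give 2 beta <= n, degrees >= alpha - 1, n < 2 beta + alpha and
   shortest_nonedge_cover.

   For a clockwise triangle u v w with extreme sides uv and vw, these numerical
   constraints force wu to be a non-extreme edge and forbid uv, vw from both
   being shortest non-edges (two_extreme_sides); the theorem follows by
   applying this to the three rotations of the triangle. *)

From mathcomp Require Import all_boot zify.
Set Implicit Arguments. Unset Strict Implicit. Unset Printing Implicit Defensive.

Section CircularDistance.
Variable n : nat.
Implicit Types u v w x y z : 'I_n.

Lemma distE u v : dist u v = if u <= v then v - u else v + n - u.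
Proof.
rewrite /dist; have hu := ltn_ord u; have hv := ltn_ord v.
case: leqP => h; last by rewrite modn_small //; lia.
have -> : v + n - u = (v - u) + n by lia.
by rewrite modnDr modn_small //; lia.
Qed.

Lemma neq_ord u v : (u != v) = (nat_of_ord u != nat_of_ord v).
Proof. by []. Qed.

(* Reduces a statement about distances between the given vertices to linear
   arithmetic on their positions 0 <= u < n. *)
Ltac dist_arith :=
  rewrite ?distE ?neq_ord;
  repeat match goal with |- context [nat_of_ord ?x] =>
    let h := fresh "hord" in
    have h := ltn_ord x; move: h; move: (nat_of_ord x) => ? end;
  repeat case: ifP; lia.

Lemma dist_lt u v : dist u v < n.
Proof. dist_arith. Qed.

Lemma dist_eq0 u v : (dist u v == 0) = (u == v).
Proof.
apply/eqP/eqP => [h|->]; last by dist_arith.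
by apply/val_inj => /=; move: h; dist_arith.
Qed.

Lemma dist_gt0 u v : u != v -> 0 < dist u v.
Proof. by rewrite -dist_eq0 lt0n. Qed.

Lemma dist_sym u v : u != v -> dist v u = n - dist u v.
Proof. dist_arith. Qed.

Lemma dist_rev u v : dist v u = if dist u v == 0 then 0 else n - dist u v.
Proof. dist_arith. Qed.

Lemma dist_tr u v w :
  dist u w = if dist u v + dist v w < n then dist u v + dist v w
             else dist u v + dist v w - n.
Proof. dist_arith. Qed.

Lemma dist_add u v w : dist u v <= dist u w -> dist u w = dist u v + dist v w.
Proof. dist_arith. Qed.

Lemma dist_injr u : injective (dist u).
Proof. by move=> v w h; apply/val_inj => /=; move: h; dist_arith. Qed.

Lemma dist_injl u : injective (fun z => dist z u).
Proof. by move=> v w h; apply/val_inj => /=; move: h; dist_arith. Qed.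

Lemma dist_exists u j : j < n -> {z | dist u z = j}.
Proof.
move=> hj; have hz : (u + j) %% n < n by rewrite ltn_mod; lia.
exists (Ordinal hz); rewrite distE /=; have hu := ltn_ord u.
case: (ltnP (u + j) n) => h; first by rewrite modn_small //; case: ifP; lia.
have -> : (u + j) %% n = u + j - n.
  have -> : u + j = (u + j - n) + n by lia.
  by rewrite modnDr modn_small; lia.
case: ifP; lia.
Qed.

Lemma cw_from_end u v w : u != v -> v != w -> u != w ->
  (dist u v < dist u w) = (dist v w < dist u w).
Proof. dist_arith. Qed.

Lemma cw_sum u v w : cw u v w -> dist u v + dist v w + dist w u = n.
Proof. rewrite /cw; dist_arith. Qed.

Lemma cw_rot u v w : cw u v w -> cw v w u.
Proof. rewrite /cw; dist_arith. Qed.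

Lemma card_interval (g : 'I_n -> nat) lo hi :
  (forall z, g z < n) -> injective g -> hi < n ->
  #|[set z | lo <= g z <= hi]| = hi.+1 - lo.
Proof.
move=> glt ginj hhi.
pose f z := Ordinal (glt z).
have finj : injective f by move=> a b /(congr1 val) /ginj.
have -> : [set z | lo <= g z <= hi] = f @^-1: [set j : 'I_n | lo <= j <= hi].
  by apply/setP => z; rewrite !inE.
rewrite card_preimset // -sum1_card big_mkcond /=.
under eq_bigr => j _ do rewrite inE.
rewrite -(big_mkord xpredT (fun j => if lo <= j <= hi then 1 else 0)).
have count N : \sum_(0 <= j < N) (if lo <= j <= hi then 1 else 0) = minn N hi.+1 - lo.
  elim: N => [|N IH]; first by rewrite big_geq //; lia.
  by rewrite big_nat_recr //= IH; case: ifP; lia.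
by rewrite count; lia.
Qed.

End CircularDistance.

Definition outdeg n (E : rel 'I_n) x : nat := #|[set y | E x y]|.
Definition indeg n (E : rel 'I_n) y : nat := #|[set x | E x y]|.

Lemma initial_segment n (g : 'I_n -> nat) (S : {set 'I_n}) :
  (forall z, g z < n) -> injective g ->
  (forall z, z \in S -> 0 < g z) ->
  (forall y z, y \in S -> 0 < g z < g y -> z \in S) ->
  forall z, (z \in S) = (0 < g z <= #|S|).
Proof.
move=> glt ginj Spos Sclosed.
have [S0|[y0 hy0]] := set_0Vmem S.
  by move=> z; rewrite S0 cards0 inE; case: (g z).
have [y1 hy1 gmax] := eq_bigmax_cond g (introT card_gt0P (ex_intro _ y0 hy0)).
have eS : S = [set z | 1 <= g z <= g y1].
  apply/setP => z; rewrite inE; apply/idP/andP => [hz|[g1 g2]].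
    by rewrite Spos // -gmax; split=> //; apply: leq_bigmax_cond.
  case: (eqVneq z y1) => [-> //|nz]; apply: Sclosed hy1 _.
  by rewrite g1 ltn_neqAle g2 andbT (inj_eq ginj).
move=> z; rewrite {1}eS inE eS (card_interval 1 glt ginj (glt y1)).
by rewrite subn1.
Qed.

Lemma cid2I n (E : rel 'I_n) :
  (forall u, E u u = false) -> (forall u v, E u v -> E v u = false) ->
  (forall u v w, cw u v w -> E u w -> E u v && E v w) -> cid2 E.
Proof.
move=> loopfree asym interval; apply/and3P; split.
- by apply/forallP => u; rewrite loopfree.
- apply/forallP => u; apply/forallP => v; apply/implyP => _.
  by apply/negP => /andP [huv hvu]; move: (asym _ _ huv); rewrite hvu.
- apply/forallP => u; apply/forallP => v; apply/forallP => w; apply/implyP.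
  by case/andP => hc he; apply: interval.
Qed.

Section CircularIntervalDigraph.
Variables (n : nat) (E : rel 'I_n).
Hypothesis hE : cid2 E.
Implicit Types u v w x y z : 'I_n.

Lemma cid_loopfree x : E x x = false.
Proof. by case/and3P: hE => /forallP h _ _; apply/negbTE/h. Qed.

Lemma cid_asym x y : E x y -> E y x = false.
Proof.
move=> hxy; case: (eqVneq x y) => [<-|nxy]; first by rewrite cid_loopfree.
case/and3P: hE => _ /forallP /(_ x) /forallP /(_ y) /implyP /(_ nxy) + _.
by rewrite hxy /= => /negbTE.
Qed.

Lemma cid_interval u v w : cw u v w -> E u w -> E u v && E v w.
Proof.
case/and3P: hE => _ _ /forallP /(_ u) /forallP /(_ v) /forallP /(_ w) /implyP h hc he.
by apply: h; rewrite hc he.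
Qed.

Lemma cid_neq x y : E x y -> x != y.
Proof. by apply: contraTneq => ->; rewrite cid_loopfree. Qed.

Lemma out_interval x y : E x y = (0 < dist x y <= outdeg E x).
Proof.
rewrite /outdeg; have := initial_segment (@dist_lt n x) (@dist_injr n x).
move/(_ [set y | E x y]) => <- //; first by rewrite inE.
- by move=> z; rewrite inE => /cid_neq /dist_gt0.
move=> y' z; rewrite !inE => hxy' /andP [hz hzy'].
have nxz : x != z by rewrite -dist_eq0 -lt0n.
have nzy' : z != y' by apply: contraTneq hzy' => ->; rewrite ltnn.
have hc : cw x z y' by rewrite /cw nxz nzy' (cid_neq hxy') hzy'.
by case/andP: (cid_interval hc hxy').
Qed.

Lemma in_interval x y : E x y = (0 < dist x y <= indeg E y).
Proof.
rewrite /indeg; have := initial_segment (fun z => @dist_lt n z y) (@dist_injl n y).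
move/(_ [set x | E x y]) => <- //; first by rewrite inE.
- by move=> z; rewrite inE => /cid_neq /dist_gt0.
move=> x' z; rewrite !inE => hx'y /andP [hz hzx'].
have nzy : z != y by rewrite -dist_eq0 -lt0n.
have nx'z : x' != z by apply: contraTneq hzx' => ->; rewrite ltnn.
have hc : cw x' z y by rewrite /cw nx'z nzy (cid_neq hx'y) cw_from_end ?(cid_neq hx'y).
by case/andP: (cid_interval hc hx'y).
Qed.

Lemma outdeg_lt x : outdeg E x < n.
Proof.
have sub : [set y | E x y] \subset [set~ x].
  by apply/subsetP => y; rewrite !inE; apply: contraTneq => ->; rewrite cid_loopfree.
have := subset_leq_card sub; rewrite cardsC1 card_ord /outdeg; have := ltn_ord x; lia.
Qed.

Lemma indeg_lt x : indeg E x < n.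
Proof.
have sub : [set y | E y x] \subset [set~ x].
  by apply/subsetP => y; rewrite !inE; apply: contraTneq => ->; rewrite cid_loopfree.
have := subset_leq_card sub; rewrite cardsC1 card_ord /indeg; have := ltn_ord x; lia.
Qed.

Lemma outdeg_nonedge x z : x != z -> E x z = false -> outdeg E x < dist x z.
Proof. by move=> nxz; rewrite out_interval dist_gt0 //= ltnNge => /negbT. Qed.

Lemma indeg_nonedge x z : x != z -> E x z = false -> indeg E z < dist x z.
Proof. by move=> nxz; rewrite in_interval dist_gt0 //= ltnNge => /negbT. Qed.

(* Since the reverse of an edge xy is missing, the out-interval of y and the
   in-interval of x both stop before the arc from x to y. *)
Lemma edge_degree_bounds x y : E x y ->
  outdeg E y <= n - dist x y - 1 /\ indeg E x <= n - dist x y - 1.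
Proof.
move=> hxy; have nxy := cid_neq hxy; have nyx : y != x by rewrite eq_sym.
have := outdeg_nonedge nyx (cid_asym hxy); have := indeg_nonedge nyx (cid_asym hxy).
rewrite (dist_sym nxy); have := dist_gt0 nxy; have := dist_lt x y; lia.
Qed.

End CircularIntervalDigraph.

Section AlphaBeta.
Variables (n : nat) (E : rel 'I_n).

Lemma alpha_le a c : nonedge E a c -> alpha E <= dist a c.
Proof.
move=> hac; rewrite /alpha.
have : (a, c) \in index_enum ('I_n * 'I_n)%type by rewrite mem_index_enum.
elim: (index_enum _) => [//|p s IH]; rewrite in_cons big_cons.
case/orP => [/eqP <-|hs]; first by rewrite /= hac geq_minl.
by case: ifP => _; [apply: leq_trans (geq_minr _ _) (IH hs) | apply: IH].
Qed.

Lemma alpha_exists : alpha E < n -> exists a c, nonedge E a c /\ dist a c = alpha E.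
Proof.
apply: (big_ind (fun m => m < n -> exists a c, nonedge E a c /\ dist a c = m)).
- by rewrite ltnn.
- by move=> x y hx hy; case: (leqP x y) => h; rewrite ?(minn_idPl h) ?(minn_idPr (ltnW h)).
- by move=> [a c] /= hac _; exists a, c.
Qed.

Lemma alpha_gt0 : 0 < n -> 0 < alpha E.
Proof.
move=> hn; apply: (big_ind (fun m => 0 < m)) => //.
- by move=> x y hx hy; rewrite leq_min hx hy.
- by move=> [a c] /and3P [hac _ _]; apply: dist_gt0.
Qed.

Lemma beta_ge x y : E x y -> dist x y <= beta E.
Proof. by move=> hxy; apply: (leq_bigmax_cond (x, y)). Qed.

Lemma beta_exists : 0 < beta E -> exists x y, E x y /\ dist x y = beta E.
Proof.
apply: (big_ind (fun m => 0 < m -> exists x y, E x y /\ dist x y = m)) => //.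
- by move=> x y hx hy; case: (leqP x y) => h; rewrite ?(maxn_idPr h) ?(maxn_idPl (ltnW h)).
- by move=> [x y] /= hxy _; exists x, y.
Qed.

Hypothesis hE : cid2 E.

(* The out-interval of x ends at an edge of length outdeg E x. *)
Lemma outdeg_le_beta x : outdeg E x <= beta E.
Proof.
case: (posnP (outdeg E x)) => [->//|hpos].
have [z hz] := dist_exists x (outdeg_lt hE x).
have : E x z by rewrite (out_interval hE) hz hpos leqnn.
by move/beta_ge; rewrite hz.
Qed.

Lemma indeg_le_beta x : indeg E x <= beta E.
Proof.
case: (posnP (indeg E x)) => [->//|hpos].
have hlt := indeg_lt hE x.
have [z hz] := dist_exists x (j := n - indeg E x) ltac:(lia).
have nxz : x != z by rewrite -dist_eq0 hz; lia.
have hzx : dist z x = indeg E x by rewrite (dist_sym nxz) hz; have := ltn_ord x; lia.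
have : E z x by rewrite (in_interval hE) hzx hpos leqnn.
by move/beta_ge; rewrite hzx.
Qed.

End AlphaBeta.

Definition delete_edge n (E : rel 'I_n) (x y : 'I_n) : rel 'I_n :=
  fun a b => E a b && ((a != x) || (b != y)).

Definition add_edge n (E : rel 'I_n) (a c : 'I_n) : rel 'I_n :=
  fun p q => E p q || ((p == a) && (q == c)).

Definition induced_path n (E : rel 'I_n) (a b c : 'I_n) : bool :=
  [&& a != b, b != c, a != c, E a b, E b c, ~~ E a c & ~~ E c a].

Section EdgeDeletionCount.
Variable n : nat.
Implicit Types (E : rel 'I_n) (a b c x y : 'I_n).

Lemma P3_induced E : P3 E = #|[set t | induced_path E t.1.1 t.1.2 t.2]|.
Proof. by []. Qed.

Lemma P3_ext E F : E =2 F -> P3 E = P3 F.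
Proof. by move=> h; rewrite !P3_induced; apply: eq_card => t; rewrite !inE /induced_path !h. Qed.

(* Deleting xy destroys the induced paths x -> y -> c and a -> x -> y, and
   creates the induced paths x -> b -> y and y -> b -> x; triple by triple: *)
Lemma delete_edge_triple E x y a b c : E x y -> E y x = false ->
  induced_path (delete_edge E x y) a b c
    + [&& a == x, b == y & induced_path E x y c]
    + [&& b == x, c == y & induced_path E a x y]
  = induced_path E a b c
    + [&& a == x, c == y & induced_path (delete_edge E x y) x b y]
    + [&& a == y, c == x & induced_path (delete_edge E x y) y b x].
Proof.
move=> hxy hyx.
have nxy : x != y by apply/negP => /eqP exy; move: hyx hxy; rewrite exy => ->.
rewrite /induced_path /delete_edge.
case: (eqVneq a x) => [?|hax]; case: (eqVneq b y) => [?|hby];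
case: (eqVneq b x) => [?|hbx]; case: (eqVneq c y) => [?|hcy];
case: (eqVneq a y) => [?|hay]; case: (eqVneq c x) => [?|hcx]; subst;
rewrite ?eqxx in nxy *; try by [].
all: rewrite ?hxy ?hyx ?(negbTE nxy) ?(eq_sym y x) ?(negbTE nxy) /= ?andbT ?andbF ?orbT ?orbF //=.
all: rewrite ?(negbTE hax) ?(negbTE hby) ?(negbTE hbx) ?(negbTE hcy) ?(negbTE hay) ?(negbTE hcx) /= ?andbT ?andbF ?orbT ?orbF //=.
all: rewrite ?(eq_sym y) ?(eq_sym x).
all: rewrite ?(negbTE hax) ?(negbTE hby) ?(negbTE hbx) ?(negbTE hcy) ?(negbTE hay) ?(negbTE hcx) /= ?andbT ?andbF ?orbT ?orbF ?addn0 //=.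
Qed.

Lemma card_slice (T : finType) (f : 'I_n -> T) (P : pred 'I_n) (S : {set T}) :
  injective f -> (forall c, (f c \in S) = P c) -> (forall t, t \in S -> exists c, t = f c) ->
  #|S| = #|[set c | P c]|.
Proof.
move=> finj hf hS; transitivity #|f @: [set c | P c]|; last exact: card_imset.
apply: eq_card => t; apply/idP/imsetP => [/[dup] /hS [c ->]|[c hc ->]].
  by rewrite hf => hc; exists c; rewrite ?inE.
by rewrite hf; rewrite inE in hc.
Qed.

Lemma delete_edge_P3 E x y : E x y -> E y x = false ->
  P3 (delete_edge E x y) + #|[set c | induced_path E x y c]| + #|[set a | induced_path E a x y]|
  = P3 E + #|[set b | induced_path (delete_edge E x y) x b y]|
         + #|[set b | induced_path (delete_edge E x y) y b x]|.
Proof.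
move=> hxy hyx.
have slice12 (P : pred 'I_n) : #|[set c | P c]|
    = #|[set t : 'I_n * 'I_n * 'I_n | [&& t.1.1 == x, t.1.2 == y & P t.2]]|.
  symmetry; apply: (card_slice (f := fun c => (x, y, c))) => [c d [] //|c|].
  - by rewrite inE /= !eqxx.
  - by move=> [[a b] c]; rewrite inE /= => /and3P [/eqP -> /eqP -> _]; exists c.
have slice23 (P : pred 'I_n) : #|[set a | P a]|
    = #|[set t : 'I_n * 'I_n * 'I_n | [&& t.1.2 == x, t.2 == y & P t.1.1]]|.
  symmetry; apply: (card_slice (f := fun a => (a, x, y))) => [c d [] //|c|].
  - by rewrite inE /= !eqxx.
  - by move=> [[a b] c]; rewrite inE /= => /and3P [/eqP -> /eqP -> _]; exists a.
have slice13 x' y' (P : pred 'I_n) : #|[set b | P b]|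
    = #|[set t : 'I_n * 'I_n * 'I_n | [&& t.1.1 == x', t.2 == y' & P t.1.2]]|.
  symmetry; apply: (card_slice (f := fun b => (x', b, y'))) => [c d [] //|c|].
  - by rewrite inE /= !eqxx.
  - by move=> [[a b] c]; rewrite inE /= => /and3P [/eqP -> /eqP -> _]; exists b.
rewrite !P3_induced (slice12 (induced_path E x y)) (slice23 (fun a => induced_path E a x y)).
rewrite (slice13 x y (fun b => induced_path (delete_edge E x y) x b y)).
rewrite (slice13 y x (fun b => induced_path (delete_edge E x y) y b x)).
have card_sum (A : pred ('I_n * 'I_n * 'I_n)) : #|[set t | A t]| = \sum_t (A t : nat).
  by rewrite -sum1_card big_mkcond; apply: eq_bigr => t _; rewrite inE; case: (A t).
rewrite !card_sum -!big_split /=; apply: eq_bigr => [[[a b] c]] _ /=.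
exact: delete_edge_triple.
Qed.

End EdgeDeletionCount.

(* For an edge xy of length d with outdeg E y = p and indeg E x = q, deleting xy
   destroys destroyed_paths n d p q induced paths and creates created_paths n d p q,
   provided the out-interval of x and the in-interval of y end exactly at xy. *)
Definition destroyed_paths (n d p q : nat) : nat :=
  minn p (n - d - 1 - q) + minn q (n - d - 1 - p).
Definition created_paths (n d p q : nat) : nat :=
  (d - 1) + (p + q - (n - d - 1)).

Section DeletingAnExtremalEdge.
Variables (n : nat) (E : rel 'I_n) (x y : 'I_n).
Hypotheses (hE : cid2 E) (hxy : E x y).
Hypotheses (hx : outdeg E x = dist x y) (hy : indeg E y = dist x y).

Let nxy : x != y := cid_neq hE hxy.

(* x -> y -> c is induced iff c lies in the out-interval of y and beyond the
   in-interval of x (going around from y). *)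
Lemma card_paths_from_edge :
  #|[set c | induced_path E x y c]|
  = minn (outdeg E y) (n - dist x y - 1 - indeg E x).
Proof.
have [hp hq] := edge_degree_bounds hE hxy.
have hk := dist_gt0 nxy; have hkn := dist_lt x y.
transitivity #|[set c | 1 <= dist y c <= minn (outdeg E y) (n - dist x y - 1 - indeg E x)]|.
  apply: eq_card => c; rewrite !inE /induced_path.
  rewrite hxy nxy /= !(out_interval hE y c) (out_interval hE x c) (in_interval hE c x) hx.
  rewrite -(dist_eq0 y c) -(dist_eq0 x c) (dist_rev x c) (dist_tr x y c).
  have := dist_lt y c.
  move: (dist x y) (dist y c) (outdeg E y) (indeg E x) hk hkn hp hq => k j p q *.
  by do ![case: ifP => ?]; lia.
by rewrite (card_interval 1 (dist_lt y) (@dist_injr n y)); lia.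
Qed.

Lemma card_paths_into_edge :
  #|[set a | induced_path E a x y]|
  = minn (indeg E x) (n - dist x y - 1 - outdeg E y).
Proof.
have [hp hq] := edge_degree_bounds hE hxy.
have hk := dist_gt0 nxy; have hkn := dist_lt x y.
transitivity #|[set a | 1 <= dist a x <= minn (indeg E x) (n - dist x y - 1 - outdeg E y)]|.
  apply: eq_card => a; rewrite !inE /induced_path.
  rewrite hxy nxy /= ?andbT (in_interval hE a x) (in_interval hE a y) (out_interval hE y a) hy.
  rewrite -(dist_eq0 a x) -(dist_eq0 a y) (dist_rev a y) (dist_tr a x y).
  have := dist_lt a x.
  move: (dist x y) (dist a x) (outdeg E y) (indeg E x) hk hkn hp hq => k j p q *.
  by do ![case: ifP => ?]; lia.
by rewrite (card_interval 1 (fun a => dist_lt a x) (@dist_injl n x)); lia.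
Qed.

(* Once xy is deleted, x -> b -> y is induced for every b strictly between x and y. *)
Lemma card_paths_across_edge :
  #|[set b | induced_path (delete_edge E x y) x b y]| = dist x y - 1.
Proof.
have hk := dist_gt0 nxy; have hkn := dist_lt x y.
transitivity #|[set b | 1 <= dist x b <= dist x y - 1]|.
  apply: eq_card => b; rewrite !inE /induced_path /delete_edge.
  rewrite (out_interval hE x b) (in_interval hE b y) (cid_asym hE hxy) !eqxx nxy /= ?orbF ?andbT.
  rewrite -(dist_eq0 x b) -(dist_eq0 b y) (eq_sym b x) -(dist_eq0 x b) andbF /= hx hy.
  move: (dist_tr x b y) (dist_lt x b) (dist_lt b y) hk hkn.
  move: (dist x y) (dist x b) (dist b y) => k j j' e1 *.
  by move: e1; case: ifP; lia.
by rewrite (card_interval 1 (dist_lt x) (@dist_injr n x)); lia.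
Qed.

(* y -> b -> x is induced in E - xy iff b is both an out-neighbour of y and an
   in-neighbour of x; these two intervals overlap in outdeg + indeg - (n-d-1) vertices. *)
Lemma card_paths_around_edge :
  #|[set b | induced_path (delete_edge E x y) y b x]|
  = outdeg E y + indeg E x - (n - dist x y - 1).
Proof.
have hk := dist_gt0 nxy; have hkn := dist_lt x y.
have [hp hq] := edge_degree_bounds hE hxy.
have hyx := dist_sym nxy.
transitivity #|[set b | n - dist x y - indeg E x <= dist y b <= outdeg E y]|.
  apply: eq_card => b; rewrite !inE /induced_path /delete_edge.
  rewrite (cid_asym hE hxy) !eqxx (eq_sym y x) nxy /= ?orbF ?orbT ?andbT ?andbF /=.
  rewrite (out_interval hE y b) (in_interval hE b x) -(dist_eq0 y b) -(dist_eq0 b x).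
  move: (dist_tr y b x) hyx (dist_lt y b) (dist_lt b x) hk hkn hp hq.
  move: (dist x y) (dist y x) (dist y b) (dist b x) (outdeg E y) (indeg E x) => k k' j j' p q e1 *.
  by move: e1; case: ifP; lia.
by rewrite (card_interval _ (dist_lt y) (@dist_injr n y) (outdeg_lt hE y)); lia.
Qed.

Lemma delete_edge_formula :
  P3 (delete_edge E x y) + destroyed_paths n (dist x y) (outdeg E y) (indeg E x)
  = P3 E + created_paths n (dist x y) (outdeg E y) (indeg E x).
Proof.
rewrite /destroyed_paths /created_paths addnA -card_paths_from_edge -card_paths_into_edge.
rewrite addnA -card_paths_across_edge -card_paths_around_edge.
exact: delete_edge_P3 hxy (cid_asym hE hxy).
Qed.

(* Deleting xy keeps the digraph a 2-free circular interval digraph: no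
   longer edge uw from x or into y needs xy as an intermediate edge. *)
Lemma delete_edge_cid2 : cid2 (delete_edge E x y).
Proof.
apply: cid2I => [u|u v /andP [huv _]|u v w hc /andP [huw hne]].
- by rewrite /delete_edge cid_loopfree.
- by rewrite /delete_edge (cid_asym hE huv).
rewrite /delete_edge; case/andP: (cid_interval hE hc huw) => -> -> /=.
move: (hc); rewrite /cw => /and4P [nuv nvw nuw hlt].
apply/andP; split; rewrite -negb_and; apply/negP => /andP [/eqP eu /eqP ev]; subst.
- by move: huw; rewrite (out_interval hE x w) hx => /andP [_ h]; lia.
- move: huw; rewrite (in_interval hE u y) hy => /andP [_ h].
  by move: hlt; rewrite cw_from_end //; lia.
Qed.

End DeletingAnExtremalEdge.

Section AddingAShortNonEdge.
Variables (n : nat) (E : rel 'I_n) (a c : 'I_n).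
Hypotheses (hE : cid2 E) (hac : nonedge E a c).

Let nac : a != c. Proof. by case/and3P: hac. Qed.
Let Eac : E a c = false. Proof. by case/and3P: hac => _ /negbTE. Qed.
Let Eca : E c a = false. Proof. by case/and3P: hac => _ _ /negbTE. Qed.

Lemma delete_add_edge : delete_edge (add_edge E a c) a c =2 E.
Proof.
move=> p q; rewrite /delete_edge /add_edge.
by case: (eqVneq p a) => [->|hp]; case: (eqVneq q c) => [->|hq]; rewrite ?Eac ?orbF ?andbT.
Qed.

Lemma outdeg_add_edge : outdeg (add_edge E a c) a = (outdeg E a).+1.
Proof.
rewrite /outdeg -add1n.
have -> : 1 = nat_of_bool (c \notin [set z | E a z]) by rewrite inE Eac.
rewrite -cardsU1; apply: eq_card => z.
by rewrite !inE /add_edge eqxx orbC.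
Qed.

Lemma indeg_add_edge : indeg (add_edge E a c) c = (indeg E c).+1.
Proof.
rewrite /indeg -add1n.
have -> : 1 = nat_of_bool (a \notin [set z | E z c]) by rewrite inE Eac.
rewrite -cardsU1; apply: eq_card => z.
by rewrite !inE /add_edge eqxx andbT orbC.
Qed.

Lemma outdeg_add_edge_other : outdeg (add_edge E a c) c = outdeg E c.
Proof.
by apply: eq_card => z; rewrite !inE /add_edge eq_sym (negbTE nac) orbF.
Qed.

Lemma indeg_add_edge_other : indeg (add_edge E a c) a = indeg E a.
Proof.
by apply: eq_card => z; rewrite !inE /add_edge (negbTE nac) andbF orbF.
Qed.

Lemma add_edge_cid2 :
  outdeg E a = dist a c - 1 -> indeg E c = dist a c - 1 -> cid2 (add_edge E a c).
Proof.
move=> ha hc; apply: cid2I => [u|u v|u v w huvw].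
- rewrite /add_edge cid_loopfree //=.
  by apply: contraNF nac => /andP [/eqP <- /eqP <-].
- rewrite /add_edge => /orP [h|/andP [/eqP -> /eqP ->]].
    rewrite (cid_asym hE h) /=; apply/negbTE/negP => /andP [/eqP ev /eqP eu].
    by move: h; rewrite ev eu Eca.
  by rewrite Eca /=; apply: contraNF nac => /andP [/eqP -> _].
rewrite /add_edge => /orP [h|/andP [/eqP eu /eqP ew]].
  by case/andP: (cid_interval hE huvw h) => -> ->.
subst u w; move: (huvw); rewrite /cw => /and4P [nav nvc _ hlt].
have hlt' : dist v c < dist a c by rewrite -cw_from_end.
rewrite (out_interval hE a v) (in_interval hE v c) ha hc !dist_gt0 //=.
by apply/andP; split; apply/orP; left; lia.
Qed.

End AddingAShortNonEdge.

(* Adding a shortest non-edge ac, when some edge is longer than it, strictly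
   decreases xi: the pairs counted by xi only lose the pairs (xy, ac). *)
Lemma xi_add_edge n (E : rel 'I_n) a c x y : nonedge E a c -> dist a c = alpha E ->
  E x y -> alpha E < dist x y -> xi (add_edge E a c) < xi E.
Proof.
move=> hac hd hxy hlt; rewrite /xi; apply: proper_card; apply/properP; split.
  apply/subsetP => [[[e1 e2] [f1 f2]]]; rewrite !inE /= => /and3P [he hf hl].
  have hf' : nonedge E f1 f2.
    by move: hf; rewrite /nonedge /add_edge => /and3P [-> /norP [-> _] /norP [-> _]].
  rewrite hf' hl andbT andbT.
  move: he; rewrite /add_edge => /orP [//|/andP [/eqP e1a /eqP e2c]]; subst.
  by have := alpha_le hf'; lia.
exists ((x, y), (a, c)).
  by rewrite inE /= hxy hac hd hlt.
by rewrite inE /= /nonedge /add_edge !eqxx /= orbT /= ?andbF.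
Qed.

Section Optimality.
Variables (n : nat) (E : rel 'I_n).
Hypothesis hopt : optimal E.

Let hE : cid2 E := hopt.1.

(* Deleting a longest edge xy cannot increase P3. *)
Lemma longest_edge_balance x y : E x y -> dist x y = beta E ->
  created_paths n (beta E) (outdeg E y) (indeg E x)
  <= destroyed_paths n (beta E) (outdeg E y) (indeg E x).
Proof.
move=> hxy hd.
have hx : outdeg E x = dist x y.
  by have := outdeg_le_beta hE x; move: hxy; rewrite (out_interval hE) => /andP [_]; lia.
have hy : indeg E y = dist x y.
  by have := indeg_le_beta hE y; move: hxy; rewrite (in_interval hE) => /andP [_]; lia.
have := delete_edge_formula hE hxy hx hy.
have [+ _] := hopt.2 _ (delete_edge_cid2 hE hxy hx hy).
by rewrite hd; lia.
Qed.

Lemma double_beta_le : 0 < beta E -> 2 * beta E <= n.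
Proof.
case/beta_exists => x [y [hxy hd]].
have := longest_edge_balance hxy hd; have := edge_degree_bounds hE hxy.
rewrite /created_paths /destroyed_paths hd; have := dist_lt x y; rewrite hd; lia.
Qed.

Hypothesis hab : alpha E < beta E.

Let hn : 0 < n. Proof. by have := double_beta_le (leq_ltn_trans (leq0n _) hab); lia. Qed.

(* Every vertex has out- and in-degree at least alpha - 1: the vertex at
   distance alpha - 1 after (before) x is joined to x in one direction, and
   the direction away from x would give an edge longer than n/2 >= beta. *)
Lemma degrees_ge_alpha x : alpha E - 1 <= outdeg E x /\ alpha E - 1 <= indeg E x.
Proof.
have h2b := double_beta_le (leq_ltn_trans (leq0n _) hab); have hx := ltn_ord x.
case: (leqP (alpha E) 1) => ha; first by split; lia.
split.
- have [z hz] := dist_exists x (j := alpha E - 1) ltac:(lia).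
  have nxz : x != z by rewrite -dist_eq0 hz; lia.
  case hxz : (E x z); first by rewrite -hz; move: hxz; rewrite (out_interval hE) => /andP [].
  case hzx : (E z x); first by have := beta_ge hzx; rewrite (dist_sym nxz) hz; lia.
  have := @alpha_le _ E x z; rewrite /nonedge nxz hxz hzx hz; lia.
- have [z hz] := dist_exists x (j := n - (alpha E - 1)) ltac:(lia).
  have nxz : x != z by rewrite -dist_eq0 hz; lia.
  have hzx' : dist z x = alpha E - 1 by rewrite (dist_sym nxz) hz; lia.
  case hzx : (E z x); first by rewrite -hzx'; move: hzx; rewrite (in_interval hE) => /andP [].
  case hxz : (E x z); first by have := beta_ge hxz; rewrite hz; lia.
  have := @alpha_le _ E z x; rewrite /nonedge eq_sym nxz hxz hzx hzx'; lia.
Qed.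

Lemma shortest_nonedge_degrees a c : nonedge E a c -> dist a c = alpha E ->
  outdeg E a = alpha E - 1 /\ indeg E c = alpha E - 1.
Proof.
case/and3P=> nac /negbTE hac /negbTE _ hd.
have := outdeg_nonedge hE nac hac; have := indeg_nonedge hE nac hac.
have [+ _] := degrees_ge_alpha a; have [_ +] := degrees_ge_alpha c.
rewrite hd; lia.
Qed.

(* Adding a shortest non-edge ac decreases xi, so it must strictly decrease P3. *)
Lemma shortest_nonedge_balance a c : nonedge E a c -> dist a c = alpha E ->
  destroyed_paths n (alpha E) (outdeg E c) (indeg E a)
  < created_paths n (alpha E) (outdeg E c) (indeg E a).
Proof.
move=> hac hd; have nac : a != c by case/and3P: hac.
have [ha hc] := shortest_nonedge_degrees hac hd; rewrite -hd in ha hc.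
have hE' := add_edge_cid2 hE hac ha hc.
have hE'ac : add_edge E a c a c by rewrite /add_edge !eqxx orbT.
have ha' : outdeg (add_edge E a c) a = dist a c.
  by rewrite outdeg_add_edge // ha subn1 prednK // dist_gt0.
have hc' : indeg (add_edge E a c) c = dist a c.
  by rewrite indeg_add_edge // hc subn1 prednK // dist_gt0.
have := delete_edge_formula hE' hE'ac ha' hc'.
rewrite outdeg_add_edge_other // indeg_add_edge_other // (P3_ext (delete_add_edge hac)).
have [x [y [hxy hxyd]]] := beta_exists (leq_ltn_trans (leq0n _) hab).
have hxi : xi (add_edge E a c) < xi E by apply: xi_add_edge hac hd hxy _; rewrite hxyd.
have [hle heq] := hopt.2 _ hE'.
have hlt : P3 (add_edge E a c) < P3 E.
  by rewrite ltn_neqAle hle andbT; apply/negP => /eqP /heq; lia.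
by rewrite hd; lia.
Qed.

Lemma shortest_nonedge_cover a c : nonedge E a c -> dist a c = alpha E ->
  n - alpha E - 1 < outdeg E c + indeg E a.
Proof.
move=> hac hd; have := shortest_nonedge_balance hac hd.
have [hc _] := degrees_ge_alpha c; have [_ ha] := degrees_ge_alpha a.
have := alpha_gt0 E hn; rewrite /created_paths /destroyed_paths; lia.
Qed.

Lemma beta_alpha_bound : n < 2 * beta E + alpha E.
Proof.
have hbn : beta E < n.
  by have [x [y [_ <-]]] := beta_exists (leq_ltn_trans (leq0n _) hab); apply: dist_lt.
have [a [c [hac hd]]] := alpha_exists (ltn_trans hab hbn).
have := shortest_nonedge_balance hac hd; have := shortest_nonedge_cover hac hd.
have := outdeg_le_beta hE c; have := indeg_le_beta hE a.
have [hc _] := degrees_ge_alpha c; have [_ ha] := degrees_ge_alpha a.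
have := alpha_gt0 E hn; rewrite /created_paths /destroyed_paths; lia.
Qed.

End Optimality.

Lemma extreme_edge n (E : rel 'I_n) x y : extreme E x y -> E x y -> dist x y = beta E.
Proof.
rewrite /extreme /longest_edge /shortest_nonedge /nonedge => /orP [/andP [_ /eqP //]|].
by case/andP => /and3P [_ /negbTE ->].
Qed.

Section ExtremeTriangle.
Variables (n : nat) (E : rel 'I_n).
Hypotheses (hopt : optimal E) (hab : alpha E < beta E).
Variables u v w : 'I_n.
Hypothesis hcw : cw u v w.

Let hE : cid2 E := hopt.1.
Let hn : 0 < n. Proof. exact: leq_ltn_trans (leq0n _) (ltn_ord u). Qed.

(* uw is not an edge: it would force uv and vw to be edges, hence longest
   edges, and then uw would be longer than beta. *)
Lemma no_edge_over_extremes : extreme E u v -> extreme E v w -> E u w = false.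
Proof.
move=> e1 e2; apply/negP => huw; case/andP: (cid_interval hE hcw huw) => huv hvw.
have hlt : dist u v < dist u w by case/and4P: hcw.
have := beta_ge huw; rewrite (dist_add (ltnW hlt)).
by rewrite (extreme_edge e1 huv) (extreme_edge e2 hvw); lia.
Qed.

(* The third side wu is an edge: otherwise the two extreme sides and the
   non-edge wu would make the circle too short (if both are longest edges) or
   leave no room for the intervals required by shortest_nonedge_cover. *)
Lemma closing_side_edge : extreme E u v -> extreme E v w -> E w u.
Proof.
move=> e1 e2; have huw := no_edge_over_extremes e1 e2.
have [_ nvw nuw _] := and4P hcw; have nwu : w != u by rewrite eq_sym.
apply/negP => /negP /negbTE hwu.
have hs := cw_sum hcw.
have hl3 : alpha E <= dist w u by apply: alpha_le; rewrite /nonedge nwu hwu huw.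
have hout_w := outdeg_nonedge hE nwu hwu; have hin_u := indeg_nonedge hE nwu hwu.
have hbound := beta_alpha_bound hopt hab.
move: e1 e2; rewrite /extreme /longest_edge /shortest_nonedge.
case/orP => /andP [huv /eqP d1]; case/orP => /andP [hvw /eqP d2].
- by clear -hs hl3 hbound d1 d2; lia.
- have := shortest_nonedge_cover hopt hab hvw d2; have := indeg_le_beta hE v.
  by clear -hs hout_w d1 d2; lia.
- have := shortest_nonedge_cover hopt hab huv d1; have := outdeg_le_beta hE v.
  by clear -hs hin_u d1 d2; lia.
- have := shortest_nonedge_cover hopt hab huv d1.
  have [_ /negbTE Evw _] := and3P hvw; have := outdeg_nonedge hE nvw Evw.
  by clear -hs hin_u d1 d2; lia.
Qed.

(* Two consecutive shortest non-edges uv, vw and an edge wu are incompatible: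
   the balance at uv forces indeg E u to exceed 3/2 * dist w u, which the
   balance at a longest edge does not allow. *)
Lemma not_two_short_sides : shortest_nonedge E u v -> shortest_nonedge E v w -> E w u -> False.
Proof.
move=> /andP [huv /eqP d1] /andP [hvw /eqP d2] hwu.
have hs := cw_sum hcw.
have [nvw /negbTE Evw _] := and3P hvw.
have hv : outdeg E v = alpha E - 1.
  by have := outdeg_nonedge hE nvw Evw; have [+ _] := degrees_ge_alpha hopt hab v; lia.
have hu : dist w u <= indeg E u by move: hwu; rewrite (in_interval hE) => /andP [].
have hd3 : 0 < dist w u by apply: dist_gt0; case/and4P: (cw_rot (cw_rot hcw)).
have ha := alpha_gt0 E hn.
have key : 3 * dist w u < 2 * indeg E u.
  move: (shortest_nonedge_balance hopt hab huv d1); rewrite hv /created_paths /destroyed_paths.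
  move: hs hu d1 d2 hd3 ha; move: (alpha E) (indeg E u) (dist w u) (dist u v) (dist v w).
  by move=> a q d3 d1' d2' *; lia.
have [x [y [hxy hd]]] := beta_exists (leq_ltn_trans (leq0n _) hab).
have := longest_edge_balance hopt hxy hd; rewrite /created_paths /destroyed_paths.
have [hp hq] := edge_degree_bounds hE hxy; rewrite hd in hp hq.
have [+ _] := degrees_ge_alpha hopt hab y; have [_ +] := degrees_ge_alpha hopt hab x.
have := indeg_le_beta hE u.
move: key hs d1 d2 hab hd3 ha hp hq.
move: (alpha E) (beta E) (outdeg E y) (indeg E x) (indeg E u) (dist w u) (dist u v) (dist v w).
by move=> a b p q l d3 d1' d2' *; lia.
Qed.

Lemma two_extreme_sides : extreme E u v -> extreme E v w ->
  ~~ extreme E w u /\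
  [|| [&& E u v, E v w & E w u], [&& E v w, E w u & shortest_nonedge E u v]
    | [&& E w u, E u v & shortest_nonedge E v w]].
Proof.
move=> e1 e2; have hwu := closing_side_edge e1 e2.
have notSS s1 s2 := not_two_short_sides s1 s2 hwu.
have hs := cw_sum hcw; have hbound := beta_alpha_bound hopt hab.
move: e1 e2; rewrite /extreme /longest_edge hwu /=.
case/orP => [/andP [huv /eqP d1]|s1]; case/orP => [/andP [hvw /eqP d2]|s2];
  try by case: (notSS s1 s2).
- split; last by rewrite huv hvw.
  by apply/negP => /orP [/eqP d3|/andP [/and3P [_ /negP //]]]; lia.
- have [_ /eqP d2] := andP s2.
  split; last by rewrite huv s2 !orbT.
  by apply/negP => /orP [/eqP d3|/andP [/and3P [_ /negP //]]]; lia.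
- have [_ /eqP d1] := andP s1.
  split; last by rewrite hvw s1 orbT.
  by apply/negP => /orP [/eqP d3|/andP [/and3P [_ /negP //]]]; lia.
Qed.

End ExtremeTriangle.

Theorem mainTheorem11 (n : nat) (E : rel 'I_n) (u v w : 'I_n) :
  4 <= n ->
  optimal E ->
  alpha E < beta E ->
  cw u v w ->
  ~~ [&& extreme E u v, extreme E v w & extreme E w u] /\
  ([|| extreme E u v && extreme E v w,
       extreme E v w && extreme E w u |
       extreme E w u && extreme E u v] ->
   [|| [&& E u v, E v w & E w u],
       [&& E u v, E v w & shortest_nonedge E w u],
       [&& E v w, E w u & shortest_nonedge E u v] |
       [&& E w u, E u v & shortest_nonedge E v w]]).
Proof.
move=> _ hopt hab hc; have hc2 := cw_rot hc; have hc3 := cw_rot hc2.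
split.
  by apply/negP => /and3P [e1 e2 e3]; case: (two_extreme_sides hopt hab hc e1 e2); rewrite e3.
case/or3P => /andP [e1 e2].
- case: (two_extreme_sides hopt hab hc e1 e2) => _.
  by case/or3P => /and3P [-> -> ->]; rewrite ?orbT.
- case: (two_extreme_sides hopt hab hc2 e1 e2) => _.
  by case/or3P => /and3P [-> -> ->]; rewrite ?orbT.
- case: (two_extreme_sides hopt hab hc3 e1 e2) => _.
  by case/or3P => /and3P [-> -> ->]; rewrite ?orbT.
Qed.
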